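(* Under the hypotheses of the subprime lemma (as in the context), define $x\sim y$ for $x,y\in V$ iff $R_{xy}$ is the graph of an isomorphism from $\mathbb A_x$ to $\mathbb A_y$. If $x\in V$ is such that $|A_x|\ge 2$ and $|A_x|$ is maximal among all $|A_z|$, $z\in V$, then there exists $y\in V$ with $y\ne x$ and $x\sim y$.
   Context: $\mathbf A$ is a finite relational structure with a majority polymorphism and a Maltsev polymorphism, $\mathcal A=\mathcal V(\mathrm{Alg}(\mathbf A))$ (the variety generated by the algebra of all polymorphisms of $\mathbf A$). $\mathcal I=(V,\{\mathbb A_x\}_{x\in V},\{R_{xy}\}_{(x,y)\in V^2},w)$ with $|V|>1$: each $\mathbb A_x\in\mathcal A$ finite with universe $A_x$; each $R_{xy}$ the universe of a subalgebra of $\mathbb A_x\times\mathbb A_y$, $R_{xx}$ the equality relation, $R_{yx}=R_{xy}^{-1}$, and for $x\ne y$, $R_{xy}$ has both projections onto. For $x\ne y$, $\theta_{xy}=\{(a,a')\in A_x^2\mid\exists b:(a,b),(a',b)\in R_{xy}\}$, $\mu_x=\bigwedge_{y\ne x}\theta_{xy}$, and $\mathbb A_x$ is prime if $\mu_x$ is the equality relation. Every domain either has one element or is subdirectly irreducible (the intersection of its non-equality congruences is not the equality relation) and prime. *)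

From HB Require Import structures.
From mathcomp Require Import all_boot.
Set Implicit Arguments. Unset Strict Implicit. Unset Printing Implicit Defensive.

Record relstruct := RelStruct {
  rs_car :> finType;
  rs_J : finType;
  rs_ar : rs_J -> nat;
  rs_rel : forall j : rs_J, {set (rs_ar j).-tuple rs_car}
}.

Definition polymorphism (A : relstruct) (n : nat) (f : n.-tuple A -> A) : Prop :=
  forall (j : rs_J A) (x : n.-tuple ((rs_ar j).-tuple A)),
    (forall i, tnth x i \in rs_rel j) ->
    [tuple f [tuple tnth (tnth x i) k | i < n] | k < rs_ar j] \in rs_rel j.

(** Operation symbols of Alg(A): one symbol for each polymorphism (of each arity). *)
Definition Sym (A : relstruct) : Type :=
  {n : nat & {f : n.-tuple A -> A | polymorphism f}}.
Definition sym_ar (A : relstruct) (s : Sym A) : nat := projT1 s.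
Definition sym_fun (A : relstruct) (s : Sym A) : (sym_ar s).-tuple A -> A :=
  proj1_sig (projT2 s).
Arguments sym_ar {A} s.
Arguments sym_fun {A} s _.

(** An algebra in the signature of Alg(A), on carrier [S]: interpretations. *)
Definition Ops (A : relstruct) (S : Type) : Type :=
  forall s : Sym A, (sym_ar s).-tuple S -> S.

Definition AlgOps (A : relstruct) : Ops A A := fun s => sym_fun s.

Definition has_majority_pol (A : relstruct) : Prop :=
  exists f : 3.-tuple A -> A, polymorphism f /\
    forall x y : A, f [tuple x; x; y] = x /\ f [tuple x; y; x] = x /\ f [tuple y; x; x] = x.

Definition has_maltsev_pol (A : relstruct) : Prop :=
  exists f : 3.-tuple A -> A, polymorphism f /\
    forall x y : A, f [tuple x; y; y] = x /\ f [tuple y; y; x] = x.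

(** Membership in the variety V(Alg(A)) = HSP(Alg(A)): the algebra (S, opsS) is a
    homomorphic image of a subalgebra [P] of a power Alg(A)^I (I an arbitrary
    index type). [h] is a surjective homomorphism from the subalgebra P onto S
    (given as a total function whose values outside P are irrelevant). *)
Definition in_variety (A : relstruct) (S : Type) (opsS : Ops A S) : Prop :=
  exists (I : Type) (P : (I -> A) -> Prop) (h : (I -> A) -> S),
    (forall (s : Sym A) (xs : (sym_ar s).-tuple (I -> A)),
        (forall k, P (tnth xs k)) ->
        P (fun i => sym_fun s (map_tuple (fun g => g i) xs))) /\
    (forall (s : Sym A) (xs : (sym_ar s).-tuple (I -> A)),
        (forall k, P (tnth xs k)) ->
        h (fun i => sym_fun s (map_tuple (fun g => g i) xs)) = opsS s (map_tuple h xs)) /\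
    (forall b : S, exists g, P g /\ h g = b).

Definition is_hom (A : relstruct) (S1 S2 : Type) (o1 : Ops A S1) (o2 : Ops A S2)
  (f : S1 -> S2) : Prop :=
  forall (s : Sym A) (xs : (sym_ar s).-tuple S1), f (o1 s xs) = o2 s (map_tuple f xs).

Definition is_congruence (A : relstruct) (S : Type) (o : Ops A S)
  (th : S -> S -> Prop) : Prop :=
  (forall a, th a a) /\ (forall a b, th a b -> th b a) /\
  (forall a b c, th a b -> th b c -> th a c) /\
  (forall (s : Sym A) (xs ys : (sym_ar s).-tuple S),
      (forall k, th (tnth xs k) (tnth ys k)) -> th (o s xs) (o s ys)).

(** Subdirectly irreducible: the intersection of all congruences different from
    the equality relation is not the equality relation. *)
Definition subdirectly_irreducible (A : relstruct) (S : Type) (o : Ops A S) : Prop :=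
  exists a b : S, a <> b /\
    forall th, is_congruence o th -> (exists c d, c <> d /\ th c d) -> th a b.

(** An instance I = (V, {A_x}, {R_xy}) (the weight w plays no role). *)
Section Instance.
Local Unset Implicit Arguments.
Variables (A : relstruct) (V : finType) (D : V -> finType)
  (ops : forall x, Ops A (D x)) (R : forall x y : V, {set (D x * D y)}).

Definition is_subuniv_prod (x y : V) : Prop :=
  forall (s : Sym A) (ps : (sym_ar s).-tuple (D x * D y)),
    (forall k, tnth ps k \in R x y) ->
    (ops x s (map_tuple fst ps), ops y s (map_tuple snd ps)) \in R x y.

Definition is_instance : Prop :=
  1 < #|V| /\
  (forall x, in_variety (ops x)) /\
  (forall x y, is_subuniv_prod x y) /\
  (forall x (a b : D x), (a, b) \in R x x <-> a = b) /\
  (forall x y (a : D x) (b : D y), (b, a) \in R y x <-> (a, b) \in R x y) /\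
  (forall x y, x != y ->
     (forall a : D x, exists b : D y, (a, b) \in R x y) /\
     (forall b : D y, exists a : D x, (a, b) \in R x y)).

Definition theta (x y : V) (a a' : D x) : Prop :=
  exists b : D y, (a, b) \in R x y /\ (a', b) \in R x y.

Definition prime_dom (x : V) : Prop :=
  forall a a' : D x, (forall y, y != x -> theta x y a a') -> a = a'.

Definition iso_graph (x y : V) : Prop :=
  exists f : D x -> D y, bijective f /\ is_hom (ops x) (ops y) f /\
    forall a b, (a, b) \in R x y <-> f a = b.

End Instance.

Arguments is_subuniv_prod {A V D} ops R x y.
Arguments is_instance {A V D} ops R.
Arguments theta {V D} R x y a a'.
Arguments prime_dom {V D} R x.
Arguments iso_graph {A V D} ops R x y.

(** The Maltsev polymorphism makes every [theta x y] a congruence of [A_x]: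
    it is reflexive because [R_xy] is left total, and transitive because from
    [(a,b), (a',b), (a',b')] in [R_xy] the Maltsev term yields
    [(m(a,a',a'), m(b,b,b')) = (a,b')] in [R_xy].  As [A_x] is prime, these
    congruences meet in the equality, so by subdirect irreducibility one of
    them, [theta x y], is the equality.  Then [R_xy] is the graph of an
    injective map [A_x -> A_y], a bijection by maximality of [|A_x|], and a
    homomorphism because [R_xy] is a subuniverse. *)
From Stdlib Require Import FunctionalExtensionality Classical.
From mathcomp Require Import all_boot.

Set Implicit Arguments.
Unset Strict Implicit.
Unset Printing Implicit Defensive.

Section VarietyIdentities.
Variable A : relstruct.

Definition pattern_tuple (T : Type) (n : nat) (p : 'I_n -> bool) (a b : T) :
  n.-tuple T := [tuple if p i then a else b | i < n].

Lemma in_variety_pattern_identity (S : Type) (o : Ops A S) (s : Sym A)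
    (p : 'I_(sym_ar s) -> bool) :
  in_variety o ->
  (forall a b : A, sym_fun s (pattern_tuple p a b) = a) ->
  forall a b : S, o s (pattern_tuple p a b) = a.
Proof.
move=> [I [P [h [_ [h_hom h_onto]]]]] id_s a b.
have [ga [Pga <-]] := h_onto a; have [gb [Pgb <-]] := h_onto b.
have P_pat k : P (tnth (pattern_tuple p ga gb) k).
  by rewrite /pattern_tuple tnth_mktuple; case: (p k).
have -> : pattern_tuple p (h ga) (h gb) = map_tuple h (pattern_tuple p ga gb).
  by apply: eq_from_tnth => k; rewrite /pattern_tuple !(tnth_map, tnth_mktuple); case: (p k).
rewrite -h_hom //; congr h; apply: functional_extensionality => i.
rewrite -[RHS](id_s (ga i) (gb i)); congr sym_fun.
by apply: eq_from_tnth => k; rewrite /pattern_tuple !(tnth_map, tnth_mktuple); case: (p k).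
Qed.

Variables (m : 3.-tuple A -> A) (pm : polymorphism m).
Hypothesis m_maltsev : forall u v : A, m [tuple u; v; v] = u /\ m [tuple v; v; u] = u.

Definition maltsev_sym : Sym A := existT _ 3 (exist _ m pm).

Lemma in_variety_maltsev (S : Type) (o : Ops A S) : in_variety o ->
  forall a b : S, o maltsev_sym [tuple a; b; b] = a /\ o maltsev_sym [tuple b; b; a] = a.
Proof.
move=> S_var a b.
have pat_l (T : Type) (c d : T) :
  pattern_tuple (fun i : 'I_3 => i == 0 :> nat) c d = [tuple c; d; d].
  by apply: eq_from_tnth => i; rewrite /pattern_tuple tnth_mktuple; case: i => -[|[|[|]]].
have pat_r (T : Type) (c d : T) :
  pattern_tuple (fun i : 'I_3 => i == 2 :> nat) c d = [tuple d; d; c].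
  by apply: eq_from_tnth => i; rewrite /pattern_tuple tnth_mktuple; case: i => -[|[|[|]]].
split; [rewrite -pat_l | rewrite -pat_r];
  apply: (in_variety_pattern_identity S_var) => c d; rewrite /sym_fun /= ?pat_l ?pat_r.
- exact: (m_maltsev c d).1.
- exact: (m_maltsev c d).2.
Qed.

End VarietyIdentities.

Lemma subdirectly_irreducible_meet (A : relstruct) (S : Type) (o : Ops A S)
    (I : Type) (P : I -> Prop) (th : I -> S -> S -> Prop) :
  subdirectly_irreducible o ->
  (forall i, P i -> is_congruence o (th i)) ->
  (forall a b, (forall i, P i -> th i a b) -> a = b) ->
  exists i, P i /\ forall a b, th i a b -> a = b.
Proof.
move=> [a [b [neq_ab monolith]]] th_cong th_meet.
apply: NNPP => no_trivial; apply: neq_ab; apply: th_meet => i Pi.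
apply: monolith; first exact: th_cong.
apply: NNPP => th_trivial; apply: no_trivial; exists i; split=> // c d th_cd.
by apply: NNPP => neq_cd; apply: th_trivial; exists c, d.
Qed.

Section Instance.
Local Unset Implicit Arguments.
Variables (A : relstruct) (V : finType) (D : V -> finType)
  (ops : forall x, Ops A (D x)) (R : forall x y : V, {set (D x * D y)}).
Variables x y : V.
Hypothesis R_sub : is_subuniv_prod ops R x y.
Variables (m : 3.-tuple A -> A) (pm : polymorphism m).
Hypothesis m_maltsev : forall u v : A, m [tuple u; v; v] = u /\ m [tuple v; v; u] = u.
Hypotheses (x_var : in_variety (ops x)) (y_var : in_variety (ops y)).
Hypothesis R_total : forall a : D x, exists b : D y, (a, b) \in R x y.
Local Set Implicit Arguments.

Lemma subuniv_prod_tuples (s : Sym A) (xs : (sym_ar s).-tuple (D x))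
    (ys : (sym_ar s).-tuple (D y)) :
  (forall k, (tnth xs k, tnth ys k) \in R x y) ->
  (ops x s xs, ops y s ys) \in R x y.
Proof.
move=> xys_R.
have := R_sub s [tuple (tnth xs i, tnth ys i) | i < sym_ar s].
have -> : map_tuple fst [tuple (tnth xs i, tnth ys i) | i < sym_ar s] = xs.
  by apply: eq_from_tnth => i; rewrite tnth_map tnth_mktuple.
have -> : map_tuple snd [tuple (tnth xs i, tnth ys i) | i < sym_ar s] = ys.
  by apply: eq_from_tnth => i; rewrite tnth_map tnth_mktuple.
by apply=> k; rewrite tnth_mktuple.
Qed.

Lemma graph_subuniv_hom (f : D x -> D y) :
  (forall a b, (a, b) \in R x y <-> f a = b) -> is_hom (ops x) (ops y) f.
Proof.
move=> R_graph s xs; apply/R_graph/subuniv_prod_tuples => k.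
by apply/R_graph; rewrite tnth_map.
Qed.

Lemma theta_congruence : is_congruence (ops x) (theta R x y).
Proof.
split; [|split; [|split]].
- by move=> a; have [b ab_R] := R_total a; exists b.
- by move=> a a' [b [ab_R a'b_R]]; exists b.
- move=> a a' a'' [b [ab_R a'b_R]] [b' [a'b'_R a''b'_R]]; exists b'; split=> //.
  have [m_a _] := in_variety_maltsev pm m_maltsev x_var a a'.
  have [_ m_b'] := in_variety_maltsev pm m_maltsev y_var b' b.
  rewrite -m_a -m_b'; apply: subuniv_prod_tuples.
  by case=> [[|[|[|]]] ?].
- move=> s xs ys xys_theta.
  have witness k : exists b, ((tnth xs k, b) \in R x y) && ((tnth ys k, b) \in R x y).
    by have [b [xs_b ys_b]] := xys_theta k; exists b; apply/andP.
  pose bs := [tuple xchoose (witness k) | k < sym_ar s].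
  have bs_R k : ((tnth xs k, tnth bs k) \in R x y) && ((tnth ys k, tnth bs k) \in R x y).
    by rewrite tnth_mktuple; exact: xchooseP (witness k).
  exists (ops y s bs); split.
  - by apply: subuniv_prod_tuples => k; case/andP: (bs_R k).
  - by apply: subuniv_prod_tuples => k; case/andP: (bs_R k).
Qed.

Lemma theta_trivial_iso_graph : #|D y| <= #|D x| ->
  (forall a a', theta R x y a a' -> a = a') -> iso_graph ops R x y.
Proof.
move=> card_yx theta_eq.
pose f a := xchoose (R_total a).
have f_R a : (a, f a) \in R x y := xchooseP (R_total a).
have f_inj : injective f.
  by move=> a1 a2 f_eq; apply: theta_eq; exists (f a1); rewrite f_R f_eq f_R.
have [g fK gK] : bijective f by apply: inj_card_bij.
have R_graph a b : (a, b) \in R x y <-> f a = b.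
  split=> [ab_R|<-] //.
  suff -> : a = g b by rewrite gK.
  by apply: theta_eq; exists b; split; rewrite // -{2}(gK b) f_R.
exists f; split; first by exists g.
by split=> //; apply: graph_subuniv_hom.
Qed.

End Instance.

Theorem mainTheorem8 (A : relstruct) (V : finType) (D : V -> finType)
  (ops : forall x, Ops A (D x)) (R : forall x y : V, {set (D x * D y)}) :
  has_majority_pol A ->
  has_maltsev_pol A ->
  is_instance ops R ->
  (forall x : V, #|D x| = 1 \/
     (subdirectly_irreducible (ops x) /\ prime_dom R x)) ->
  forall x : V, 2 <= #|D x| -> (forall z : V, #|D z| <= #|D x|) ->
  exists y : V, y != x /\ iso_graph ops R x y.
Proof.
move=> _ [m [pm m_maltsev]] [_ [var [sub [_ [_ onto]]]]] doms x x_ge2 x_max.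
have [x_1|[x_si x_prime]] := doms x; first by rewrite x_1 in x_ge2.
have R_total y : y != x -> forall a : D x, exists b : D y, (a, b) \in R x y.
  by move=> y_x; have [] := onto x y; rewrite // eq_sym.
have [y [y_x theta_eq]] := subdirectly_irreducible_meet x_si
  (fun y y_x => theta_congruence (sub x y) pm m_maltsev (var x) (var y) (R_total y y_x))
  x_prime.
exists y; split=> //.
exact: theta_trivial_iso_graph (sub x y) (R_total y y_x) (x_max y) theta_eq.
Qed.
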